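(* Let $G$ be a finite connected multigraph without self-loops with a boundary vertex $\partial$, where both orientations of each edge $e$ carry the same nonnegative weight $U_e$, and the collection of weights of the unoriented edges $(U_e)_{e\in E}$ is generic. Perform the CLEB walk from a vertex $x\neq\partial$, and let $S_t$ be the set of oriented edges exposed by it up to step $t$. Let $\tau_1=1$ and, inductively for $k\ge2$, let $\tau_k$ be the smallest $t>\tau_{k-1}$ such that the oriented edge revealed by the CLEB walk at step $t$ has a reversal that was not exposed before step $t$. Let $\bar S_{\tau_k}$ be the set of unoriented edges one of whose orientations lies in $S_{\tau_k}$. Let $(T_k)_{k\ge1}$ be the invasion percolation process started at $x$. Then $\bar S_{\tau_k}=T_k$ for every $k$ for which $\tau_k$ is defined.
   Context: Weights $(W_x)_{x\in N}$ are generic if $\sum_{x\in S}n_xW_x\neq0$ for every finite $S$ and integers $n_x$ not all zero. Invasion percolation started at $x$: $T_1$ is the edge of smallest weight incident to $x$; given the tree $T_k$, $T_{k+1}$ is $T_k$ together with the edge of smallest weight among edges with exactly one endpoint in (the vertex set of) $T_k$. Contraction of an oriented cycle $C$: remove the vertices of $C$ and all oriented edges with both endpoints in $C$, add a new vertex $v_C$, and replace each oriented edge with exactly one endpoint in $C$ by the edge with that endpoint replaced by $v_C$; edges of contracted graphs are identified with edges of $G$. CLEB walk from $x$: set $G_0=G$, $U_0$ the given weights of oriented edges, $S_0=\emptyset$, $P_0$ the empty path at $x$, current vertex $v_1=x$. At step $j\ge1$, subtract $\pi=\min$ of the current weights over the outgoing edges of $v_j$ in $G_{j-1}$ from the weights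 of all those outgoing edges, and let $\vec e$ be the unique outgoing edge of $v_j$ now of weight $0$; $S_j=S_{j-1}\cup\{\vec e\}$ ($\vec e$ is said to be revealed/exposed at step $j$). If $\vec e_+$ is not on the path $P_{j-1}$: $G_j=G_{j-1}$, $P_j=P_{j-1}$ extended by $\vec e$, $v_{j+1}=\vec e_+$, and stop if $\vec e_+=\partial$. If $\vec e_+$ is a vertex $y$ of $P_{j-1}$: contract the cycle formed by the part of $P_{j-1}$ from $y$ to $v_j$ together with $\vec e$ to obtain $G_j$ (with the current modified weights), let $P_j$ be $P_{j-1}$ truncated at $y$ (now ending at the new vertex $v_C$), and $v_{j+1}=v_C$. *)

From mathcomp Require Import all_boot all_order all_algebra.
Set Implicit Arguments. Unset Strict Implicit. Unset Printing Implicit Defensive.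
Import Order.TTheory GRing.Theory Num.Theory.
Local Open Scope ring_scope.

Section Graph.
Variables (V E : finType) (ends : E -> V * V).

Definition oedge := (E * bool)%type.
Definition otail (a : oedge) : V := if a.2 then (ends a.1).1 else (ends a.1).2.
Definition ohead (a : oedge) : V := if a.2 then (ends a.1).2 else (ends a.1).1.
Definition orev (a : oedge) : oedge := (a.1, ~~ a.2).

Definition no_self_loops := forall e, (ends e).1 != (ends e).2.
Definition adjacent : rel V :=
  fun u v => [exists e, (ends e == (u, v)) || (ends e == (v, u))].
Definition connected_graph := forall u v, connect adjacent u v.
End Graph.

(* Genericity: no nontrivial integer combination of the weights vanishes
   (E is finite, so finite subsets S with coefficients n_x amount to
   integer vectors indexed by E). *)
Definition generic (R : nzRingType) (E : finType) (U : E -> R) :=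
  forall n : {ffun E -> int}, n != 0 -> \sum_(e : E) U e *~ n e != 0.

(* Invasion percolation started at x. invasion 0 = empty tree (vertex set
   {x}); invasion k = T_k for k >= 1 (None if undefined). *)
Section Invasion.
Variables (R : realFieldType) (V E : finType) (ends : E -> V * V)
  (U : E -> R) (x : V).

Definition ip_vertices (T : {set E}) : {set V} :=
  x |: \bigcup_(e in T) [set (ends e).1; (ends e).2].
Definition ip_boundary (T : {set E}) : {set E} :=
  [set e | ((ends e).1 \in ip_vertices T) != ((ends e).2 \in ip_vertices T)].
Definition ip_next (T : {set E}) : option E :=
  [pick e in ip_boundary T | [forall f in ip_boundary T, U e <= U f]].
Fixpoint invasion (k : nat) : option {set E} :=
  match k with
  | 0 => Some set0
  | k'.+1 => obind (fun T => omap (fun e => e |: T) (ip_next T)) (invasion k')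
  end.
End Invasion.

(* A vertex of a contracted graph G_j is represented by the
   block of original vertices contracted into it; the vertices of G_j form
   the partition cs_blocks of V, and the oriented edges of G_j are exactly
   the oriented edges of G whose endpoints lie in different blocks. *)
Section CLEB.
Variables (R : realFieldType) (V E : finType) (ends : E -> V * V)
  (U : E -> R) (bd x : V).

Record cleb_state := ClebState {
  cs_blocks : {set {set V}};
  cs_w : oedge E -> R;
  cs_path : seq {set V};          (* vertices of the path P_j (last = current vertex) *)
  cs_stopped : bool }.

Definition cleb_init : cleb_state :=
  ClebState [set [set v] | v : V] (fun a => U a.1) [:: [set x]] false.

Definition cleb_step (s : cleb_state) : option (oedge E * cleb_state) :=
  if cs_stopped s then None else
  let B := last set0 (cs_path s) in
  let out := [set a : oedge E | (otail ends a \in B) && (ohead ends a \notin B)] in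
  match [pick a in out | [forall b in out, cs_w s a <= cs_w s b]] with
  | None => None
  | Some a0 =>
    let pi := cs_w s a0 in
    let w' := fun a => if a \in out then cs_w s a - pi else cs_w s a in
    match [pick a in out | w' a == 0] with
    | None => None
    | Some e =>
      let H := pblock (cs_blocks s) (ohead ends e) in
      if H \in cs_path s then
        let i := index H (cs_path s) in
        let C := drop i (cs_path s) in
        let vC := \bigcup_(b <- C) b in
        Some (e, ClebState ((cs_blocks s :\: [set b in C]) :|: [set vC]) w'
                   (rcons (take i (cs_path s)) vC) false)
      else Some (e, ClebState (cs_blocks s) w' (rcons (cs_path s) H) (bd \in H))
    end
  end.

Fixpoint cleb_run (n : nat) : option cleb_state :=
  match n with
  | 0 => Some cleb_init
  | n'.+1 => obind (fun s => omap snd (cleb_step s)) (cleb_run n')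
  end.

Definition revealed (j : nat) : option (oedge E) :=
  match j with
  | 0 => None
  | j'.+1 => obind (fun s => omap fst (cleb_step s)) (cleb_run j')
  end.

Definition exposed (t : nat) : {set oedge E} :=
  [set a | has (fun j => revealed j == Some a) (iota 1 t)].

Definition Sbar (t : nat) : {set E} :=
  [set e | ((e, true) \in exposed t) || ((e, false) \in exposed t)].

Definition is_new (t : nat) : bool :=
  if revealed t is Some a then orev a \notin exposed t.-1 else false.

Definition tau_time (t : nat) : bool := (t == 1%N) || ((1 < t)%N && is_new t).

Definition tau_at (k t : nat) : bool :=
  tau_time t && (count tau_time (iota 1 t) == k).
End CLEB.

(* With symmetric generic weights the CLEB walk only ever contracts 2-cycles.
   Its path P_0 ... P_m consists of disjoint blocks covering the vertex set W of
   the invaded tree, each path edge e_j is a U-minimal exit of P_j, U decreases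
   along the path, and the current weights of the exits of P_j are U - U(e_j).
   So the next revealed edge a is a U-minimal exit of P_m.  If a leaves W, it is
   the minimal boundary edge of W (each boundary edge exits some P_j, and
   U(a) <= U(e_j)), i.e. the next invaded edge, and its reversal is unexposed.
   Otherwise, comparing U(a) with the exits of the block containing its head
   forces a to be the reversal of e_(m-1): the walk contracts P_(m-1) P_m and
   exposes no new unoriented edge. *)

From Pilot Require Import Defs.
From mathcomp Require Import all_boot all_order all_algebra.
Set Implicit Arguments. Unset Strict Implicit. Unset Printing Implicit Defensive.
Import Order.TTheory GRing.Theory Num.Theory.

Lemma rcons_take_last (T : Type) (x0 : T) s n :
  size s = n.+1 -> s = rcons (take n s) (nth x0 s n).
Proof. by move=> sz; rewrite -take_nth ?sz // take_oversize ?sz. Qed.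

Lemma iota1S t : iota 1 t.+1 = rcons (iota 1 t) t.+1.
Proof. by rewrite -cats1 -[t.+1 in LHS]addn1 iotaD add1n. Qed.

Section PathCover.
Variable V : finType.
Implicit Types (P Q : seq {set V}) (A B C : {set V}) (v : V).

Definition path_cover P : {set V} := \bigcup_(B <- P) B.

Lemma path_coverP P v : reflect (exists2 B, B \in P & v \in B) (v \in path_cover P).
Proof. by rewrite /path_cover bigcup_seq; apply: bigcupP. Qed.

Lemma mem_path_cover P B v : B \in P -> v \in B -> v \in path_cover P.
Proof. by move=> PB Bv; apply/path_coverP; exists B. Qed.

Lemma path_cover_rcons P B : path_cover (rcons P B) = path_cover P :|: B.
Proof. by rewrite /path_cover -cats1 big_cat big_seq1. Qed.

Lemma path_cover_pair B1 B2 : path_cover [:: B1; B2] = B1 :|: B2.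
Proof. by rewrite /path_cover !big_cons big_nil setU0. Qed.

Lemma path_cover_merge Q B1 B2 :
  path_cover (rcons Q (path_cover [:: B1; B2])) = path_cover (rcons (rcons Q B1) B2).
Proof. by rewrite !path_cover_rcons path_cover_pair setUA. Qed.

Lemma disjoint_setUl A B C : [disjoint A :|: B & C] = [disjoint A & C] && [disjoint B & C].
Proof. by rewrite -!setI_eq0 setIUl setU_eq0. Qed.

Lemma disjoint_path_cover P B :
  [disjoint path_cover P & B] = all (fun A => [disjoint A & B]) P.
Proof.
rewrite /path_cover; elim: P => [|A P IHP]; last by rewrite big_cons disjoint_setUl IHP.
by rewrite big_nil; apply/pred0P => v; rewrite !inE.
Qed.

Definition disjoint_blocks P :=
  pairwise (fun A B : {set V} => [disjoint A & B]) P && (set0 \notin P).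

Lemma disjoint_blocks_rcons P B :
  disjoint_blocks (rcons P B) =
  [&& disjoint_blocks P, B != set0 & [disjoint path_cover P & B]].
Proof.
rewrite /disjoint_blocks pairwise_rcons mem_rcons in_cons disjoint_path_cover.
rewrite negb_or eq_sym.
by case: (all _ P); case: pairwise; case: (B == set0); case: (set0 \in P).
Qed.

Lemma disjoint_blocks_nth_inj P i j v :
  disjoint_blocks P -> i < size P -> j < size P ->
  v \in nth set0 P i -> v \in nth set0 P j -> i = j.
Proof.
case/andP=> /(pairwiseP set0) dP _ ltiP ltjP vi vj.
have not_lt k l : k < size P -> l < size P ->
    v \in nth set0 P k -> v \in nth set0 P l -> ~~ (k < l).
  by move=> ltk ltl vk vl; apply/negP => /(dP k l ltk ltl)/disjointFl/(_ vl); rewrite vk.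
by apply/eqP; rewrite eqn_leq [i <= j]leqNgt [j <= i]leqNgt (not_lt i j) ?(not_lt j i).
Qed.

Lemma disjoint_blocks_mem_inj P B B' v :
  disjoint_blocks P -> B \in P -> B' \in P -> v \in B -> v \in B' -> B = B'.
Proof.
move=> dP /(nthP set0)[i ltiP <-] /(nthP set0)[j ltjP <-] vi vj.
by rewrite (disjoint_blocks_nth_inj dP ltiP ltjP vi vj).
Qed.

Lemma disjoint_blocks_uniq P : disjoint_blocks P -> uniq P.
Proof.
elim: P => //= A P IHP /andP[/andP[dA dP]]; rewrite in_cons negb_or => /andP[A0 P0].
have uP : uniq P by apply: IHP; apply/andP.
rewrite uP andbT; apply: contra A0 => PA.
by have /allP/(_ A PA) := dA; rewrite -setI_eq0 setIid eq_sym.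
Qed.

Lemma pblock_unique (bl : {set {set V}}) B v :
  B \in bl -> v \in B -> {in bl, forall B', v \in B' -> B' = B} -> pblock bl v = B.
Proof.
move=> blB Bv uB; rewrite /pblock; case: pickP => [B' /andP[/uB]|/(_ B)] //=.
by rewrite blB Bv.
Qed.
End PathCover.

Section OrientedEdges.
Variables (V E : finType) (ends : E -> V * V).
Local Notation otail := (otail ends).
Local Notation ohead := (Defs.ohead ends).
Implicit Types (a b : oedge E) (B W : {set V}).

Definition exits B : {set oedge E} := [set a | (otail a \in B) && (ohead a \notin B)].

Lemma otail_rev a : otail (orev a) = ohead a.
Proof. by case: a => e []. Qed.

Lemma ohead_rev a : ohead (orev a) = otail a.
Proof. by case: a => e []. Qed.

Lemma orevK : involutive (@orev E).
Proof. by case=> e b; rewrite /orev negbK. Qed.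

Lemma exits_rev a B : (orev a \in exits B) = (ohead a \in B) && (otail a \notin B).
Proof. by rewrite inE otail_rev ohead_rev. Qed.

Lemma oedge_same_edge a b : a.1 = b.1 -> a = b \/ a = orev b.
Proof. by case: a b => e [] [f []] /= ->; [left | right | right | left]. Qed.

Lemma ends_oedge a : [set (ends a.1).1; (ends a.1).2] = [set otail a; ohead a].
Proof. by case: a => e [] //=; rewrite setUC. Qed.

Lemma crossingP f W :
  reflect (exists d : bool, (f, d) \in exits W) (((ends f).1 \in W) != ((ends f).2 \in W)).
Proof.
rewrite /otail /Defs.ohead.
case h1: ((ends f).1 \in W); case h2: ((ends f).2 \in W) => /=; constructor.
- by case=> -[]; rewrite inE /= h1 h2.
- by exists true; rewrite inE /= h1 h2.
- by exists false; rewrite inE /= h1 h2.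
- by case=> -[]; rewrite inE /= h1 h2.
Qed.
End OrientedEdges.

Lemma generic_inj (R : nzRingType) (E : finType) (U : E -> R) : generic U -> injective U.
Proof.
move=> gU e f Uef; apply/eqP; apply: contraT => nef.
pose n : {ffun E -> int} := [ffun g => ((g == e)%:Z - (g == f)%:Z)%R].
have n0 : n != 0%R.
  apply/eqP => /ffunP /(_ e); rewrite !ffunE eqxx (negbTE nef) /=.
  by move/eqP; rewrite oner_eq0.
have sum1 h : (\sum_i U i *~ (i == h)%:Z = U h)%R.
  rewrite (bigD1 h) //= eqxx mulr1z big1 ?addr0 // => g /negbTE ->.
  by rewrite mulr0z.
have : (\sum_g U g *~ n g = U e - U f)%R.
  under eq_bigr => g _ do rewrite ffunE mulrzBr.
  by rewrite sumrB !sum1.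
by rewrite Uef subrr => /eqP; rewrite (negbTE (gU n n0)).
Qed.

Section InvasionFacts.
Variables (R : realFieldType) (V E : finType) (ends : E -> V * V) (U : E -> R) (x : V).
Hypothesis U_inj : injective U.

Lemma ip_vertices_setU1 T e :
  ip_vertices ends x (e |: T) = ip_vertices ends x T :|: [set (ends e).1; (ends e).2].
Proof. by rewrite /ip_vertices bigcup_setU big_set1 [_ :|: \bigcup_(f in T) _]setUC setUA. Qed.

Lemma ip_next_min T e :
  e \in ip_boundary ends x T -> {in ip_boundary ends x T, forall f, (U e <= U f)%R} ->
  ip_next ends U x T = Some e.
Proof.
move=> bTe minTe; rewrite /ip_next; case: pickP => [f /andP[bTf /forall_inP minTf]|/(_ e)].
  by congr Some; apply: U_inj; apply/eqP; rewrite eq_le minTf // minTe.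
by rewrite bTe /=; move/negP; case; apply/forall_inP.
Qed.
End InvasionFacts.

Section WalkShape.
Variables (R : realFieldType) (V E : finType) (ends : E -> V * V) (U : E -> R).
Variable e0 : oedge E.
Local Notation otail := (otail ends).
Local Notation ohead := (Defs.ohead ends).
Local Notation exits := (exits ends).
Implicit Types (P Q : seq {set V}) (B : {set V}) (es : seq (oedge E)) (a b : oedge E).
Implicit Types (bl : {set {set V}}) (w : oedge E -> R) (c : R).

(* The offset of the j-th block of the path is the weight of the path edge leaving it;
   the last block has no such edge and gets the default [c] of [nth]. *)
Definition offset es c j : R := nth c [seq U a.1 | a <- es] j.

Lemma offset_rcons es a c j :
  offset (rcons es a) c j =
  if (j < size es)%N then offset es c j else if j == size es then U a.1 else c.
Proof. by rewrite /offset map_rcons nth_rcons size_map. Qed.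

Lemma offset_default es c j : (size es <= j)%N -> offset es c j = c.
Proof. by move=> le_es_j; rewrite /offset nth_default ?size_map. Qed.

Lemma offset_nth es c c' j : (j < size es)%N -> offset es c j = offset es c' j.
Proof. by move=> ltje; rewrite /offset (set_nth_default c') ?size_map. Qed.

Definition shift_exits B w (d : R) b : R := if b \in exits B then (w b - d)%R else w b.

Record walk_shape bl P w es c : Prop := WalkShape {
  shape_size : size P = (size es).+1;
  shape_disjoint : disjoint_blocks P;
  shape_blocks : forall B,
    (B \in bl) = (B \in P) || [exists v, (v \notin path_cover P) && (B == [set v])];
  shape_ends : forall j, (j < size es)%N ->
    (otail (nth e0 es j) \in nth set0 P j) && (ohead (nth e0 es j) \in nth set0 P j.+1);
  shape_min : forall j, (j < size es)%N ->
    {in exits (nth set0 P j), forall b, U (nth e0 es j).1 <= U b.1}%R;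
  shape_sorted : pairwise (fun a b => U b.1 <= U a.1)%R es;
  shape_weights : forall j, (j < size P)%N ->
    {in exits (nth set0 P j), forall b, w b = U b.1 - offset es c j}%R;
  shape_fresh : forall b, otail b \notin path_cover P -> w b = U b.1 }.

Section Shape.
Variables (bl : {set {set V}}) (P : seq {set V}) (w : oedge E -> R) (es : seq (oedge E)) (c : R).
Hypothesis sh : walk_shape bl P w es c.

Lemma shape_last : last set0 P = nth set0 P (size es).
Proof. by rewrite -nth_last (shape_size sh). Qed.

Lemma shape_exits_last j b : (j < size P)%N -> b \in exits (nth set0 P j) ->
  (b \in exits (last set0 P)) = (j == size es).
Proof.
move=> ltjP; rewrite shape_last; case: eqP => [-> // | ne_j_es].
rewrite !inE => /andP[bj _]; apply/negP => /andP[bm _]; apply: ne_j_es.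
by apply: disjoint_blocks_nth_inj (shape_disjoint sh) ltjP _ bj bm; rewrite (shape_size sh).
Qed.

Lemma shape_last_weights : {in exits (last set0 P), forall b, w b = U b.1 - c}%R.
Proof.
move=> b; rewrite shape_last => bm.
by rewrite (shape_weights sh (j := size es)) ?offset_default ?(shape_size sh).
Qed.

Lemma shape_rev_last j : size es = j.+1 -> orev (nth e0 es j) \in exits (last set0 P).
Proof.
move=> sz; have ltj : (j < size es)%N by rewrite sz.
have /andP[tj hj] := shape_ends sh ltj.
rewrite exits_rev shape_last sz hj; apply: contraL tj => tm.
have ltjP : (j < size P)%N by rewrite (shape_size sh) sz ltnS ltnW.
have ltmP : (j.+1 < size P)%N by rewrite (shape_size sh) sz.
by apply/negP => /(disjoint_blocks_nth_inj (shape_disjoint sh) ltjP ltmP)/(_ tm)/n_Sn.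
Qed.

Lemma exits_last_cover b : b \in exits (last set0 P) -> otail b \in path_cover P.
Proof.
rewrite shape_last inE => /andP[tb _]; apply: mem_path_cover tb.
by apply: mem_nth; rewrite (shape_size sh).
Qed.

Lemma shape_pblock_in B v : B \in P -> v \in B -> pblock bl v = B.
Proof.
move=> PB Bv; apply: pblock_unique => [|//|B']; first by rewrite (shape_blocks sh) PB.
rewrite (shape_blocks sh) => /orP[PB' vB' | /existsP[u /andP[uP /eqP ->]]].
  exact: disjoint_blocks_mem_inj (shape_disjoint sh) PB' PB vB' Bv.
by rewrite in_set1 => /eqP vu; move: uP; rewrite -vu (mem_path_cover PB Bv).
Qed.

Lemma shape_pblock_out v : v \notin path_cover P -> pblock bl v = [set v].
Proof.
move=> vP; apply: pblock_unique => [||B']; rewrite ?set11 //.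
  by rewrite (shape_blocks sh); apply/orP; right; apply/existsP; exists v; rewrite vP eqxx.
rewrite (shape_blocks sh) => /orP[PB' vB' | /existsP[u /andP[_ /eqP ->]]].
  by move: vP; rewrite (mem_path_cover PB' vB').
by rewrite in_set1 => /eqP ->.
Qed.

Lemma extend_blocks v : v \notin path_cover P -> forall B,
  (B \in bl) = (B \in rcons P [set v]) ||
    [exists u, (u \notin path_cover (rcons P [set v])) && (B == [set u])].
Proof.
move=> vP B; rewrite (shape_blocks sh) mem_rcons in_cons path_cover_rcons.
have [-> | nBv] := eqVneq B [set v].
  by apply/orP; right; apply/existsP; exists v; rewrite vP eqxx.
congr (_ || _); apply/existsP/existsP => -[u /andP[uP /eqP Bu]]; exists u; rewrite Bu eqxx andbT.
  by rewrite in_setU in_set1 negb_or uP; apply: contra nBv => /eqP uv; rewrite Bu uv.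
by move: uP; rewrite in_setU negb_or => /andP[].
Qed.

Section MinimalExit.
Variable a : oedge E.
Hypotheses (a_exit : a \in exits (last set0 P))
  (a_min : {in exits (last set0 P), forall b, U a.1 <= U b.1}%R).

Lemma exit_below_path : {in es, forall b, U a.1 <= U b.1}%R.
Proof.
move=> b es_b; set j := (size es).-1.
have sz : size es = j.+1 by rewrite prednK // lt0n size_eq0; apply: contraTneq es_b => ->.
have le_a_l : (U a.1 <= U (nth e0 es j).1)%R := a_min (shape_rev_last sz).
have := shape_sorted sh; rewrite (rcons_take_last e0 sz) pairwise_rcons => /andP[/allP below _].
move: es_b; rewrite (rcons_take_last e0 sz) mem_rcons in_cons => /orP[/eqP -> // | /below].
exact: le_trans le_a_l.
Qed.

Lemma exit_cover_min : {in exits (path_cover P), forall b, U a.1 <= U b.1}%R.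
Proof.
move=> b; rewrite inE => /andP[/path_coverP[B PB tB] hb].
have [j ltjP Bj] := nthP set0 PB.
have bj : b \in exits (nth set0 P j).
  by rewrite inE Bj tB; apply: contra hb; apply: mem_path_cover PB.
have := shape_exits_last ltjP bj; case: eqP => [_ /a_min // | ne_j_es _].
have ltj : (j < size es)%N by rewrite ltn_neqAle (introN eqP ne_j_es) -ltnS -(shape_size sh).
exact: le_trans (exit_below_path (mem_nth e0 ltj)) (shape_min sh ltj bj).
Qed.

Lemma exit_into_path : injective U -> ohead a \in path_cover P ->
  exists Q B1 B2 es', [/\ P = rcons (rcons Q B1) B2, es = rcons es' (orev a),
                         size es' = size Q & ohead a \in B1].
Proof.
move=> U_inj /path_coverP[_ /(nthP set0)[i ltiP <-] hi].
have ltmP : (size es < size P)%N by rewrite (shape_size sh).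
have ta : otail a \in nth set0 P (size es) by move: a_exit; rewrite shape_last inE => /andP[].
have ne_i_es : i != size es.
  by apply: contraTneq hi => ->; move: a_exit; rewrite shape_last inE => /andP[].
have ltie : (i < size es)%N by rewrite ltn_neqAle ne_i_es -ltnS -(shape_size sh).
have ra : orev a \in exits (nth set0 P i).
  rewrite exits_rev hi; apply/negP => ti; move/eqP: ne_i_es; apply.
  exact: disjoint_blocks_nth_inj (shape_disjoint sh) ltiP ltmP ti ta.
have same_edge : a.1 = (nth e0 es i).1.
  apply: U_inj; apply/eqP.
  by rewrite eq_le exit_below_path ?mem_nth // (shape_min sh ltie ra).
have /andP[ti hi'] := shape_ends sh ltie.
have ai : a = orev (nth e0 es i).
  case: (oedge_same_edge same_edge) => // ai; move/eqP: ne_i_es; case.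
  by apply: disjoint_blocks_nth_inj (shape_disjoint sh) ltiP ltmP _ ta; rewrite ai.
have sz : size es = i.+1.
  have ltiP' : (i.+1 < size P)%N by rewrite (shape_size sh) ltnS.
  move: hi'; rewrite -[nth e0 es i]orevK -ai ohead_rev => hta.
  exact/esym/(disjoint_blocks_nth_inj (shape_disjoint sh) ltiP' ltmP hta ta).
exists (take i P), (nth set0 P i), (nth set0 P i.+1), (take i es); split => //.
- by rewrite -take_nth //; apply: rcons_take_last; rewrite (shape_size sh) sz.
- by rewrite ai orevK; apply: rcons_take_last.
- by rewrite !size_take ltie ltiP.
Qed.

Lemma extend_weights : ohead a \notin path_cover P ->
  forall j, (j < size (rcons P [set ohead a]))%N ->
  {in exits (nth set0 (rcons P [set ohead a]) j), forall b,
    shift_exits (last set0 P) w (U a.1 - c) b = U b.1 - offset (rcons es a) 0 j}%R.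
Proof.
move=> vP j; rewrite size_rcons ltnS leq_eqVlt => /orP[/eqP -> | ltjP] b.
  rewrite nth_rcons ltnn eqxx inE in_set1 => /andP[/eqP tb _].
  have bm : b \notin exits (last set0 P) by apply: contra vP => /exits_last_cover; rewrite tb.
  rewrite /shift_exits (negbTE bm) (shape_fresh sh) ?tb // offset_default ?subr0 //.
  by rewrite size_rcons (shape_size sh).
rewrite nth_rcons ltjP => bj; rewrite /shift_exits (shape_exits_last ltjP bj).
rewrite (shape_weights sh ltjP bj) offset_rcons.
have [-> | ne_j_es] := eqVneq j (size es).
  by rewrite ltnn offset_default // opprB addrA subrK.
have ltje : (j < size es)%N by rewrite ltn_neqAle ne_j_es -ltnS -(shape_size sh).
by rewrite ltje (offset_nth _ 0 ltje).
Qed.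

Lemma shape_extend : ohead a \notin path_cover P ->
  walk_shape bl (rcons P [set ohead a]) (shift_exits (last set0 P) w (U a.1 - c)) (rcons es a) 0.
Proof.
move=> vP; have szP := shape_size sh.
have ta : otail a \in nth set0 P (size es) by move: a_exit; rewrite shape_last inE => /andP[].
split.
- by rewrite !size_rcons szP.
- rewrite disjoint_blocks_rcons (shape_disjoint sh) disjoint_sym disjoints1 vP andbT /=.
  by apply/set0Pn; exists (ohead a); rewrite set11.
- exact: extend_blocks.
- move=> j; rewrite size_rcons ltnS leq_eqVlt => /orP[/eqP -> | ltje].
    by rewrite !nth_rcons szP !ltnn ltnSn !eqxx ta set11.
  by rewrite !nth_rcons szP !ltnS ltje (ltnW ltje); apply: (shape_ends sh).
- move=> j; rewrite size_rcons ltnS leq_eqVlt => /orP[/eqP -> | ltje].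
    by rewrite !nth_rcons szP ltnn ltnSn eqxx -shape_last.
  by rewrite !nth_rcons ltje szP ltnS ltnW //; apply: (shape_min sh).
- rewrite pairwise_rcons (shape_sorted sh) andbT; apply/allP.
  exact: exit_below_path.
- exact: extend_weights.
- move=> b; rewrite path_cover_rcons in_setU negb_or => /andP[tb _].
  rewrite /shift_exits ifN ?(shape_fresh sh) //.
  by apply: contra tb; apply: exits_last_cover.
Qed.
End MinimalExit.
End Shape.

Section Contract.
Variables (bl : {set {set V}}) (Q : seq {set V}) (B1 B2 : {set V}).
Variables (w : oedge E -> R) (es : seq (oedge E)) (l : oedge E) (c : R).
Hypothesis sh : walk_shape bl (rcons (rcons Q B1) B2) w (rcons es l) c.
Local Notation P := (rcons (rcons Q B1) B2).
Local Notation P' := (rcons Q (path_cover [:: B1; B2])).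

Lemma contract_size : size es = size Q.
Proof. by have := shape_size sh; rewrite !size_rcons => -[]. Qed.

Lemma nth_contract j : (j < size Q)%N -> nth set0 P' j = nth set0 P j.
Proof. by move=> ltjQ; rewrite !nth_rcons size_rcons ltjQ ltnS ltnW. Qed.

Lemma nth_contract_sub j : (j <= size Q)%N -> nth set0 P j \subset nth set0 P' j.
Proof.
rewrite leq_eqVlt => /orP[/eqP -> | /nth_contract -> //].
by rewrite !nth_rcons size_rcons ltnSn !ltnn eqxx path_cover_pair subsetUl.
Qed.

Lemma contract_blocks B :
  (B \in (bl :\: [set B' in [:: B1; B2]]) :|: [set path_cover [:: B1; B2]]) =
  (B \in P') || [exists v, (v \notin path_cover P') && (B == [set v])].
Proof.
rewrite path_cover_merge in_setU in_setD in_set1 in_set (shape_blocks sh).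
rewrite [B \in P']mem_rcons in_cons.
have [-> | _] := eqVneq B (path_cover [:: B1; B2]); first by rewrite orbT.
have catP : P = Q ++ [:: B1; B2] by rewrite -!cats1 -catA.
rewrite orbF /= catP mem_cat; have [CB | nCB] := boolP (B \in [:: B1; B2]); last first.
  by rewrite orbF.
apply/esym/norP; split.
  have := disjoint_blocks_uniq (shape_disjoint sh); rewrite catP cat_uniq.
  by case/and3P=> _ /hasPn/(_ B CB).
have PB : B \in P by rewrite catP mem_cat CB orbT.
apply/existsP => -[v /andP[vP /eqP Bv]].
by move: vP; rewrite -catP (mem_path_cover PB) // Bv set11.
Qed.

Lemma contract_weights j : (j < size P')%N ->
  {in exits (nth set0 P' j), forall b,
    shift_exits B2 w (U l.1 - c) b = U b.1 - offset es (U l.1) j}%R.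
Proof.
have szP : size P = (size Q).+2 by rewrite !size_rcons.
have esl : size (rcons es l) = (size Q).+1 by rewrite size_rcons contract_size.
have exitsB2 k b : (k < size P)%N -> b \in exits (nth set0 P k) ->
    (b \in exits B2) = (k == (size Q).+1).
  by move=> ltkP bk; rewrite -[B2](last_rcons set0 (rcons Q B1)) (shape_exits_last sh ltkP bk) esl.
rewrite size_rcons ltnS leq_eqVlt => /orP[/eqP -> | ltjQ] b; last first.
  rewrite nth_contract // => bj; have ltjP : (j < size P)%N by rewrite szP ltnW // ltnW.
  rewrite /shift_exits (exitsB2 _ _ ltjP bj) (shape_weights sh ltjP bj).
  have -> : (j == (size Q).+1) = false by rewrite ltn_eqF // ltnS ltnW.
  by rewrite offset_rcons contract_size ltjQ (offset_nth _ (U l.1)) ?contract_size.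
rewrite offset_default ?contract_size // nth_rcons ltnn eqxx path_cover_pair inE !in_setU negb_or.
case/andP=> /orP[tb | tb] /andP[hb1 hb2].
  have bQ : b \in exits (nth set0 P (size Q)).
    by rewrite nth_rcons size_rcons ltnSn nth_rcons ltnn eqxx inE tb.
  have ltQP : (size Q < size P)%N by rewrite szP ltnW.
  rewrite /shift_exits (exitsB2 _ _ ltQP bQ) (ltn_eqF (ltnSn _)) (shape_weights sh ltQP bQ).
  by rewrite offset_rcons contract_size ltnn eqxx.
have bB2 : b \in exits B2 by rewrite inE tb.
have ltP : ((size Q).+1 < size P)%N by rewrite szP.
have bP : b \in exits (nth set0 P (size Q).+1) by rewrite nth_rcons size_rcons ltnn eqxx.
rewrite /shift_exits bB2 (shape_weights sh ltP bP) offset_default ?esl //.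
by rewrite opprB addrA subrK.
Qed.

Lemma shape_contract :
  walk_shape ((bl :\: [set B in [:: B1; B2]]) :|: [set path_cover [:: B1; B2]]) P'
    (shift_exits B2 w (U l.1 - c)) es (U l.1).
Proof.
have szP : size P = (size Q).+2 by rewrite !size_rcons.
split.
- by rewrite size_rcons contract_size.
- have := shape_disjoint sh; rewrite !disjoint_blocks_rcons path_cover_rcons path_cover_pair.
  case/and3P=> /and3P[dQ B10 dQB1] _; rewrite disjoint_setUl => /andP[dQB2 _].
  rewrite dQ setU_eq0 negb_and B10 /= disjoint_sym disjoint_setUl.
  by rewrite disjoint_sym dQB1 disjoint_sym dQB2.
- exact: contract_blocks.
- move=> j ltje; have ltj : (j < size (rcons es l))%N by rewrite size_rcons ltnW.
  have ltjQ : (j < size Q)%N by rewrite -contract_size.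
  have /andP[tj hj] := shape_ends sh ltj; rewrite [nth e0 _ _]nth_rcons ltje in tj hj.
  rewrite nth_contract // tj /=.
  by apply: subsetP hj; apply: nth_contract_sub.
- move=> j ltje; have ltj : (j < size (rcons es l))%N by rewrite size_rcons ltnW.
  rewrite nth_contract -?contract_size //.
  by have := shape_min sh ltj; rewrite [nth e0 _ _]nth_rcons ltje.
- by have := shape_sorted sh; rewrite pairwise_rcons => /andP[].
- exact: contract_weights.
- move=> b; rewrite path_cover_merge => tb; rewrite /shift_exits ifN ?(shape_fresh sh) //.
  rewrite inE negb_and; apply/orP; left; apply: contra tb.
  by apply: mem_path_cover; rewrite mem_rcons mem_head.
Qed.
End Contract.
End WalkShape.

Section Walk.
Variables (R : realFieldType) (V E : finType) (ends : E -> V * V) (U : E -> R) (bd x : V).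
Variable e0 : oedge E.
Hypothesis U_inj : injective U.
Local Notation ohead := (Defs.ohead ends).
Local Notation exits := (exits ends).
Local Notation run := (cleb_run ends U bd x).
Local Notation revealed := (revealed ends U bd x).
Local Notation exposed := (exposed ends U bd x).
Local Notation Sbar := (Sbar ends U bd x).
Local Notation tau := (tau_time ends U bd x).
Implicit Types (s : cleb_state R V E) (a b : oedge E).

Variant cleb_move s s' (H : {set V}) : Prop :=
  | MoveContract of H \in cs_path s &
      cs_blocks s' = (cs_blocks s :\: [set B in drop (index H (cs_path s)) (cs_path s)])
                       :|: [set path_cover (drop (index H (cs_path s)) (cs_path s))] &
      cs_path s' = rcons (take (index H (cs_path s)) (cs_path s))
                         (path_cover (drop (index H (cs_path s)) (cs_path s)))
  | MoveExtend of H \notin cs_path s &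
      cs_blocks s' = cs_blocks s & cs_path s' = rcons (cs_path s) H.

Lemma cleb_step_spec s a s' c :
  {in exits (last set0 (cs_path s)), forall b, cs_w s b = U b.1 - c}%R ->
  cleb_step ends bd s = Some (a, s') ->
  [/\ a \in exits (last set0 (cs_path s)),
      {in exits (last set0 (cs_path s)), forall b, U a.1 <= U b.1}%R,
      cs_w s' = shift_exits ends (last set0 (cs_path s)) (cs_w s) (U a.1 - c)%R &
      cleb_move s s' (pblock (cs_blocks s) (ohead a))].
Proof.
move=> ws; rewrite /cleb_step; case: (cs_stopped s) => //.
case: pickP => [a0 /andP[a0_exit /forall_inP a0_min] | //].
case: pickP => [e /andP[e_exit] | //]; rewrite e_exit subr_eq0 => /eqP we.
rewrite -/(exits _) in a0_exit a0_min e_exit *.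
rewrite !ws // in we; move/(congr1 (fun z => z + c)%R): we; rewrite !subrK => Ue.
have e_min : {in exits (last set0 (cs_path s)), forall b, U e.1 <= U b.1}%R.
  by move=> b bx; have := a0_min b bx; rewrite !ws // lerD2r Ue.
have -> : cs_w s a0 = (U e.1 - c)%R by rewrite ws // Ue.
by case: ifP => H_in [<- <-]; split => //; constructor; rewrite ?H_in.
Qed.

Lemma cleb_step_exists s b :
  cs_stopped s = false -> b \in exits (last set0 (cs_path s)) ->
  exists p, cleb_step ends bd s = Some p.
Proof.
move=> not_stopped bx; rewrite /cleb_step not_stopped -/(exits _).
have [a0 a0_exit' a0_min] := arg_minP (cs_w s) bx.
have a0_exit : a0 \in exits (last set0 (cs_path s)) := a0_exit'.
case: pickP => [a1 /andP[a1_exit _] | /(_ a0)]; last first.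
  by rewrite a0_exit /=; move/negP; case; apply/forall_inP.
case: pickP => [e _ | /(_ a1)]; last by rewrite a1_exit subrr eqxx.
by case: ifP => _; eexists.
Qed.

Lemma cleb_run_step t s a s' : run t = Some s -> cleb_step ends bd s = Some (a, s') ->
  revealed t.+1 = Some a /\ run t.+1 = Some s'.
Proof. by move=> /= -> /= ->. Qed.

Lemma cleb_run_pred t s' : run t.+1 = Some s' ->
  exists s a, run t = Some s /\ cleb_step ends bd s = Some (a, s').
Proof.
rewrite /=; case: (run t) => [s|] //=.
by case step: (cleb_step ends bd s) => [[a s'']|] //= [<-]; exists s, a.
Qed.

Lemma revealed_run t a : revealed t.+1 = Some a -> exists s, run t.+1 = Some s.
Proof.
rewrite /= /Defs.revealed; case: (run t) => [s|] //=.
by case: (cleb_step ends bd s) => [[a' s']|] //= _; exists s'.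
Qed.

Lemma exposed0 : exposed 0 = set0.
Proof. by apply/setP => b; rewrite !inE. Qed.

Lemma exposedS t a : revealed t.+1 = Some a -> exposed t.+1 = a |: exposed t.
Proof.
move=> rv; apply/setP => b; rewrite !inE iota1S has_rcons rv.
by congr (_ || _); apply/eqP/eqP => [[]|->].
Qed.

Lemma Sbar0 : Sbar 0 = set0.
Proof. by apply/setP => e; rewrite /Defs.Sbar exposed0 !inE. Qed.

Lemma Sbar_exposed t a : a \in exposed t -> a.1 \in Sbar t.
Proof. by case: a => e [] ex; rewrite inE ex ?orbT. Qed.

Lemma SbarS t a : revealed t.+1 = Some a -> Sbar t.+1 = a.1 |: Sbar t.
Proof.
move=> rv; apply/setP => e; rewrite /Defs.Sbar (exposedS rv) !inE.
by case: a {rv} => f [] /=; rewrite !xpair_eqE /=; case: (e == f); rewrite ?orbT ?orbF.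
Qed.

Lemma count_tauS t : count tau (iota 1 t.+1) = (count tau (iota 1 t) + tau t.+1)%N.
Proof. by rewrite iota1S -cats1 count_cat /= addn0. Qed.

Lemma tau_timeS t a : revealed t.+1 = Some a -> tau t.+1 = (t == 0%N) || (orev a \notin exposed t).
Proof. by move=> rv; rewrite /tau_time /is_new rv eqSS ltnS lt0n; case: eqP. Qed.

Lemma ohead_ip_vertices (T : {set E}) a : a.1 \in T -> ohead a \in ip_vertices ends x T.
Proof.
move=> Ta; rewrite /ip_vertices in_setU1; apply/orP; right.
by apply/bigcupP; exists a.1; rewrite // ends_oedge !inE eqxx orbT.
Qed.

Record cleb_inv s t : Prop := CLEBInv {
  inv_shape : exists es c,
    walk_shape ends U e0 (cs_blocks s) (cs_path s) (cs_w s) es c /\ {subset es <= exposed t};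
  inv_vertices : ip_vertices ends x (Sbar t) = path_cover (cs_path s);
  inv_invasion : invasion ends U x (count tau (iota 1 t)) = Some (Sbar t) }.

Lemma cleb_inv0 : cleb_inv (cleb_init U x) 0.
Proof.
have cover_x : path_cover [:: [set x]] = [set x] by rewrite /path_cover big_seq1.
split; last by rewrite Sbar0.
- exists [::], 0%R; split => //; split => //=.
  + by rewrite /disjoint_blocks /= inE eq_sym; apply/set0Pn; exists x; rewrite set11.
  + move=> B; rewrite cover_x inE; apply/imsetP/idP => [[v _ ->] | ].
      have [-> | vx] := eqVneq v x; first by rewrite eqxx.
      by apply/orP; right; apply/existsP; exists v; rewrite in_set1 vx eqxx.
    case/orP => [/eqP -> | /existsP[v /andP[_ /eqP ->]]]; last by exists v.
    by exists x.
  + by case=> // _ b _; rewrite /offset /= subr0.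
- by rewrite Sbar0 /ip_vertices big_set0 setU0 cover_x.
Qed.

Section Step.
Variables (t : nat) (s s' : cleb_state R V E) (a : oedge E) (es : seq (oedge E)) (c : R).
Local Notation P := (cs_path s).
Hypotheses (sh : walk_shape ends U e0 (cs_blocks s) P (cs_w s) es c)
  (es_exposed : {subset es <= exposed t})
  (vertices : ip_vertices ends x (Sbar t) = path_cover P)
  (invasion_t : invasion ends U x (count tau (iota 1 t)) = Some (Sbar t))
  (revealed_a : revealed t.+1 = Some a)
  (a_exit : a \in exits (last set0 P))
  (a_min : {in exits (last set0 P), forall b, U a.1 <= U b.1}%R)
  (w_s' : cs_w s' = shift_exits ends (last set0 P) (cs_w s) (U a.1 - c)%R)
  (move : cleb_move s s' (pblock (cs_blocks s) (ohead a))).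

Lemma ip_next_exit : ohead a \notin path_cover P -> ip_next ends U x (Sbar t) = Some a.1.
Proof.
move=> aP; apply: (ip_next_min U_inj).
  rewrite inE vertices; apply/crossingP; exists a.2; rewrite -surjective_pairing inE aP andbT.
  exact: (exits_last_cover sh a_exit).
move=> f; rewrite inE vertices => /crossingP[d fd].
exact: (exit_cover_min sh a_min fd).
Qed.

Lemma cleb_inv_extend : ohead a \notin path_cover P -> cleb_inv s' t.+1.
Proof.
move=> aP; have H := shape_pblock_out sh aP.
case: move => [|_ bl' P']; first by rewrite H => /mem_path_cover/(_ (set11 _)); rewrite (negbTE aP).
have new : orev a \notin exposed t.
  by apply: contra aP => /Sbar_exposed/(ohead_ip_vertices (a := a)); rewrite vertices.
have tau1 : tau t.+1 by rewrite (tau_timeS revealed_a) new orbT.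
split.
- exists (rcons es a), 0%R; split; first by rewrite bl' P' w_s' H; apply: shape_extend.
  move=> b; rewrite mem_rcons in_cons (exposedS revealed_a) in_setU1.
  by case/orP=> [-> // | /es_exposed ->]; rewrite orbT.
- rewrite (SbarS revealed_a) ip_vertices_setU1 vertices P' H path_cover_rcons ends_oedge.
  rewrite setUA; congr (_ :|: _); apply/setUidPl.
  by rewrite sub1set (exits_last_cover sh a_exit).
- by rewrite count_tauS tau1 addn1 /= invasion_t /= ip_next_exit // (SbarS revealed_a).
Qed.

Lemma cleb_inv_contract : ohead a \in path_cover P -> cleb_inv s' t.+1.
Proof.
case/(exit_into_path sh a_exit a_min U_inj) => Q [B1 [B2 [es' [eP ees szQ aB1]]]].
have catP : P = Q ++ [:: B1; B2] by rewrite eP -!cats1 -catA.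
have B1Q : B1 \notin Q.
  have := disjoint_blocks_uniq (shape_disjoint sh); rewrite catP cat_uniq.
  by case/and3P=> _ /hasPn/(_ B1 (mem_head _ _)).
have PB1 : B1 \in P by rewrite catP mem_cat mem_head orbT.
have H := shape_pblock_in sh PB1 aB1.
case: move => [_ bl' P' | ]; last by rewrite H PB1.
have idx : index B1 P = size Q by rewrite catP index_cat (negbTE B1Q) /= eqxx addn0.
rewrite H idx catP drop_size_cat // take_size_cat // in bl' P'.
have ra : orev a \in exposed t by apply: es_exposed; rewrite ees mem_rcons mem_head.
have t0 : t != 0%N by apply: contraTneq ra => ->; rewrite exposed0 in_set0.
have tau0 : tau t.+1 = false by rewrite (tau_timeS revealed_a) (negbTE t0) ra.
have Sb : Sbar t.+1 = Sbar t.
  by rewrite (SbarS revealed_a); apply/setUidPr; rewrite sub1set (Sbar_exposed ra).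
have sh' := sh; rewrite eP ees in sh'.
split.
- exists es', (U a.1); split; first by rewrite bl' P' w_s' eP last_rcons; apply: shape_contract sh'.
  move=> b es'b; rewrite (exposedS revealed_a) in_setU1 es_exposed ?orbT //.
  by rewrite ees mem_rcons in_cons es'b orbT.
- by rewrite Sb vertices P' path_cover_merge -eP.
- by rewrite count_tauS tau0 addn0 Sb.
Qed.
End Step.

Lemma cleb_inv_step t s a s' :
  cleb_inv s t -> run t = Some s -> cleb_step ends bd s = Some (a, s') -> cleb_inv s' t.+1.
Proof.
case=> -[es [c [sh es_exposed]]] vertices invasion_t run_s step_s.
have [a_exit a_min w_s' move] := cleb_step_spec (shape_last_weights sh) step_s.
have [revealed_a _] := cleb_run_step run_s step_s.
case: (boolP (ohead a \in path_cover (cs_path s))).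
- exact: cleb_inv_contract sh es_exposed vertices invasion_t revealed_a a_exit a_min w_s' move.
- exact: cleb_inv_extend sh es_exposed vertices invasion_t revealed_a a_exit a_min w_s' move.
Qed.

Lemma cleb_inv_run t s : run t = Some s -> cleb_inv s t.
Proof.
elim: t s => [s [<-] | t IHt s' /cleb_run_pred[s [a [run_s step_s]]]]; first exact: cleb_inv0.
exact: cleb_inv_step (IHt s run_s) run_s step_s.
Qed.

Lemma start_has_exit : no_self_loops ends -> connected_graph ends -> x != bd ->
  exists a, a \in exits [set x].
Proof.
move=> no_loops conn x_bd; have /connectP[[|y p] /= xp bd_last] := conn x bd.
  by rewrite bd_last eqxx in x_bd.
case/andP: xp => /existsP[e /orP[] /eqP ends_e] _; have := no_loops e; rewrite ends_e /= => xy.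
- by exists (e, true); rewrite inE /otail /Defs.ohead /= ends_e /= !in_set1 eqxx eq_sym xy.
- by exists (e, false); rewrite inE /otail /Defs.ohead /= ends_e /= !in_set1 eqxx xy.
Qed.
End Walk.

Local Open Scope ring_scope.

Theorem mainTheorem8 (R : realFieldType) (V E : finType) (ends : E -> V * V)
    (U : E -> R) (bd x : V) :
  no_self_loops ends -> connected_graph ends ->
  (forall e, 0 <= U e) -> generic U -> x != bd ->
  forall k t : nat, tau_at ends U bd x k t ->
    invasion ends U x k = Some (Sbar ends U bd x t).
Proof.
(* Only the order of the weights matters. *)
move=> no_loops conn _ gen x_bd k t /andP[tau_t /eqP <-].
have [a0 a0_exit] := start_has_exit no_loops conn x_bd.
suff [s /(cleb_inv_run a0 (generic_inj gen))[_ _ ->]] : exists s, cleb_run ends U bd x t = Some s.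
  by [].
case: t tau_t => [|[|t]] //.
  move=> _; have [[a s] step] := cleb_step_exists bd (s := cleb_init U x) (erefl false) a0_exit.
  by exists s; rewrite /= step.
rewrite /tau_time /is_new; case rv: (revealed ends U bd x t.+2) => [a|] //= _.
by have [s run_s] := revealed_run rv; exists s.
Qed.
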